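(* Let $\mathcal{E}=(\mathbf{R},\mathbf{S},\Sigma_{st},\mathbf{F})$ be a consistent constructive relational to RDF data exchange setting and let $\mathcal{Q}$ be a class of Boolean graph queries robust under simulation. For any query $Q\in\mathcal{Q}$ and any consistent instance $I$ of $\mathbf{R}$, $\mathit{true}$ is the certain answer to $Q$ in $I$ w.r.t. $\mathcal{E}$ if and only if $Q$ is true in every universal simulation solution to $\mathcal{E}$ for $I$.
   Context: Values: $\mathsf{Iri}$ (IRIs, containing predicates $\mathsf{Pred}$), $\mathsf{NullIri}$, $\mathsf{Lit}$ with null literals $\mathsf{NullLit}\subseteq\mathsf{Lit}$; null values are those in $\mathsf{NullLit}\cup\mathsf{NullIri}$, other values are constants. $\mathbf{R}=(\mathcal{R},\Sigma_{fd})$: relation names with arities and functional dependencies; an instance assigns finite sets of tuples of non-null literals to relation names and is consistent if it satisfies $\Sigma_{fd}$. A typed graph: finite set of triples $(s,p,o)$, $s\in\mathsf{Iri}\cup\mathsf{NullIri}$, $p\in\mathsf{Pred}$, $o\in\mathsf{Iri}\cup\mathsf{NullIri}\cup\mathsf{Lit}$, with type facts $T(n)$ ($T\in\mathcal{T}$) and $\mathit{Literal}(n)$ (literal nodes only of type $\mathit{Literal}$, others only of types in $\mathcal{T}$). Deterministic shape schema $\mathbf{S}=(\mathcal{T},\delta)$: partial $\delta:\mathcal{T}\times\mathsf{Pred}\to(\mathcal{T}\cup\{\mathit{Literal}\})\times\{1,?,*,+\}$; a typed graph satisfies it iff for each $\delta(T,p)=S^\mu$, every $p$-successor of a $T$-typed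 node has type $S$, with at most one such successor if $\mu\in\{1,?\}$ and at least one if $\mu\in\{1,+\}$. Constructive setting: IRI constructors $f\in\mathcal{F}$ interpreted as $f^F:\mathsf{Lit}^n\to\mathsf{Iri}$ (constants) with pairwise disjoint ranges; full st-tgds $\forall\bar x.\,\varphi\Rightarrow\psi$, $\varphi$ a conjunction of atoms over $\mathcal{R}$, $\psi$ a conjunction of atoms $\mathit{Triple}(t_1,p,t_2)$, $T(t)$, $\mathit{Literal}(t)$ with terms variables or $f(\bar u)$. A solution for $I$ is a typed graph satisfying $\mathbf{S}$ that together with $I$ satisfies $\Sigma_{st}$; $\mathcal{E}$ is consistent if every consistent instance has a solution. $\mathit{true}$ is the certain answer to a Boolean query $Q$ in $I$ w.r.t. $\mathcal{E}$ iff $Q$ is true in every solution for $I$. Simulation (on the underlying graphs): a relation $R$ between nodes of $G$ and $H$ such that for $(n,m)\in R$: $n$ literal iff $m$ literal; if $n$ is not null then $n=m$; every edge $(n,p,n')\in G$ is matched by some $(m,p,m')\in H$ with $(n',m')\in R$. $G$ is simulated by $H$ if every node of $G$ is related by some simulation to some node of $H$. A class of Boolean queries is robust under simulation if, whenever $G$ is simulated by $H$, every query of the class true in $G$ is true in $H$. A universal simulation solution to $\mathcal{E}$ for $I$ is a solution $\mathcal{U}$ for $I$ that is simulated by every solution for $I$. *)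

From Stdlib Require List.
From mathcomp Require Import all_boot.
Set Implicit Arguments. Unset Strict Implicit. Unset Printing Implicit Defensive.

Section RelToRDF.

Variables (Iri Lit : Type) (Pred : Iri -> Prop).

Inductive value : Type :=
  | VIri of Iri
  | VNullIri of nat
  | VLit of Lit
  | VNullLit of nat.

Definition is_lit (v : value) : Prop :=
  match v with VLit _ | VNullLit _ => True | _ => False end.
Definition is_null (v : value) : Prop :=
  match v with VNullIri _ | VNullLit _ => True | _ => False end.
Definition is_iri_node (v : value) : Prop :=
  match v with VIri _ | VNullIri _ => True | _ => False end.

Definition triple : Type := (value * Iri * value)%type.

Inductive mult : Type := MOne | MOpt | MStar | MPlus.
Inductive stype (Ty : Type) : Type := SType of Ty | SLiteral.

Inductive term (Fn : Type) : Type :=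
  | TVar of nat
  | TFun of Fn & list nat.

Inductive hatom (Fn Ty : Type) : Type :=
  | HTriple of term Fn & Iri & term Fn
  | HType of Ty & term Fn
  | HLit of term Fn.

Record tgd (Rel Fn Ty : Type) : Type := Tgd {
  tbody : list (Rel * list nat);
  thead : list (hatom Fn Ty) }.

Record setting : Type := Setting {
  Rel : finType;
  arity : Rel -> nat;
  (* FD (r, A, B) : attributes A determine attributes B in relation r *)
  fds : list (Rel * list nat * list nat);
  Ty : finType;
  delta : Ty -> Iri -> option (stype Ty * mult);
  Fn : finType;
  farity : Fn -> nat;
  finterp : Fn -> list Lit -> Iri;
  st_tgds : list (tgd Rel Fn Ty) }.

Section WithSetting.
Variable E : setting.

Definition term_vars (t : term (Fn E)) : list nat :=
  match t with TVar x => [:: x] | TFun _ xs => xs end.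
Definition hatom_vars (a : hatom (Fn E) (Ty E)) : list nat :=
  match a with
  | HTriple t1 _ t2 => term_vars t1 ++ term_vars t2
  | HType _ t => term_vars t
  | HLit t => term_vars t end.
Definition term_wf (t : term (Fn E)) : Prop :=
  match t with TVar _ => True | TFun f xs => length xs = farity f end.

Definition wf_setting : Prop :=
  (forall (T : Ty E) p, delta T p <> None -> Pred p) /\
  (forall (f g : Fn E) a b, length a = farity f -> length b = farity g ->
     finterp f a = finterp g b -> f = g) /\
  (* st-tgds are well formed full st-tgds *)
  (forall d, List.In d (st_tgds E) ->
     (forall r xs, List.In (r, xs) (tbody d) -> length xs = arity r) /\
     (forall a, List.In a (thead d) ->
        (forall x, List.In x (hatom_vars a) ->
           exists r xs, List.In (r, xs) (tbody d) /\ List.In x xs) /\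
        match a with
        | HTriple t1 p t2 => Pred p /\ term_wf t1 /\ term_wf t2
        | HType _ t => term_wf t
        | HLit t => term_wf t end)).

Definition instance : Type := Rel E -> list (list Lit).

Definition is_instance (I : instance) : Prop :=
  forall r t, List.In t (I r) -> length t = arity r.

Definition satisfies_fds (I : instance) : Prop :=
  forall r A B, List.In (r, A, B) (fds E) ->
    forall t1 t2, List.In t1 (I r) -> List.In t2 (I r) ->
      (forall i, List.In i A -> List.nth_error t1 i = List.nth_error t2 i) ->
      forall j, List.In j B -> List.nth_error t1 j = List.nth_error t2 j.

Definition consistent_instance (I : instance) : Prop :=
  is_instance I /\ satisfies_fds I.

Record tgraph : Type := TGraph {
  gtriples : list triple;
  gtypes : list (value * Ty E);
  glits : list value }.

Definition is_typed_graph (G : tgraph) : Prop :=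
  (forall s p o, List.In (s, p, o) (gtriples G) -> is_iri_node s /\ Pred p) /\
  (forall n T, List.In (n, T) (gtypes G) -> ~ is_lit n) /\
  (forall n, List.In n (glits G) -> is_lit n).

Definition has_stype (G : tgraph) (S : stype (Ty E)) (n : value) : Prop :=
  match S with
  | SType T => List.In (n, T) (gtypes G)
  | SLiteral => List.In n (glits G) end.

Definition satisfies_shape (G : tgraph) : Prop :=
  forall T p S mu, delta T p = Some (S, mu) ->
  forall n, List.In (n, T) (gtypes G) ->
    (forall o, List.In (n, p, o) (gtriples G) -> has_stype G S o) /\
    ((mu = MOne \/ mu = MOpt) ->
       forall o1 o2, List.In (n, p, o1) (gtriples G) ->
         List.In (n, p, o2) (gtriples G) -> o1 = o2) /\
    ((mu = MOne \/ mu = MPlus) -> exists o, List.In (n, p, o) (gtriples G)).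

Definition eval_term (v : nat -> Lit) (t : term (Fn E)) : value :=
  match t with
  | TVar x => VLit (v x)
  | TFun f xs => VIri (finterp f (map v xs)) end.

Definition hatom_holds (G : tgraph) (v : nat -> Lit) (a : hatom (Fn E) (Ty E))
  : Prop :=
  match a with
  | HTriple t1 p t2 => List.In (eval_term v t1, p, eval_term v t2) (gtriples G)
  | HType T t => List.In (eval_term v t, T) (gtypes G)
  | HLit t => List.In (eval_term v t) (glits G) end.

Definition satisfies_tgds (I : instance) (G : tgraph) : Prop :=
  forall d, List.In d (st_tgds E) ->
  forall v : nat -> Lit,
    (forall r xs, List.In (r, xs) (tbody d) -> List.In (map v xs) (I r)) ->
    forall a, List.In a (thead d) -> hatom_holds G v a.

Definition solution (I : instance) (G : tgraph) : Prop :=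
  is_typed_graph G /\ satisfies_shape G /\ satisfies_tgds I G.

Definition consistent_setting : Prop :=
  forall I, consistent_instance I -> exists G, solution I G.

End WithSetting.

Record graph : Type := Graph { gnodes : list value; gedges : list triple }.

Definition underlying (E : setting) (G : tgraph E) : graph :=
  Graph (map (fun t => t.1.1) (gtriples G) ++ map (fun t => t.2) (gtriples G)
         ++ map fst (gtypes G) ++ glits G)
        (gtriples G).

Definition simulation (G H : graph) (R : value -> value -> Prop) : Prop :=
  forall n m, R n m ->
    List.In n (gnodes G) /\ List.In m (gnodes H) /\
    (is_lit n <-> is_lit m) /\
    (~ is_null n -> n = m) /\
    (forall p n', List.In (n, p, n') (gedges G) ->
       exists m', List.In (m, p, m') (gedges H) /\ R n' m').

Definition simulated (G H : graph) : Prop :=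
  forall n, List.In n (gnodes G) ->
    exists R, simulation G H R /\ exists m, List.In m (gnodes H) /\ R n m.

Definition query : Type := graph -> Prop.

Definition robust_under_simulation (QC : query -> Prop) : Prop :=
  forall Q, QC Q -> forall G H, simulated G H -> Q G -> Q H.

Definition certain_true (E : setting) (I : instance E) (Q : query) : Prop :=
  forall G, solution I G -> Q (underlying G).

Definition universal_sim_solution (E : setting) (I : instance E) (U : tgraph E)
  : Prop :=
  solution I U /\
  forall G, solution I G -> simulated (underlying U) (underlying G).

End RelToRDF.

From mathcomp Require Import all_boot.
From mathcomp Require Import boolp.
Set Implicit Arguments. Unset Strict Implicit. Unset Printing Implicit Defensive.

(* The universal simulation solution [univ] keeps the facts about constants
   that hold in every solution, and represents every other node by a
   canonical null [null_of X] for a set X of types that some non-literal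
   node carries in every solution.  Since the shape schema is deterministic,
   the types forced on the required p-successor of an X-node form a set
   [succ_types X p] that depends only on X, so the p-edges of [null_of X] can
   be chosen canonically as well.  Relating each constant to itself,
   [null_of X] to any node carrying all types of X, and the one null literal
   to any literal is then a simulation of [univ] into every solution, and
   robustness transfers Q from [univ] to all solutions. *)

Local Notation In := List.In.

Lemma In_seq_cat (A : Type) (x : A) (s1 s2 : seq A) :
  In x (s1 ++ s2) <-> In x s1 \/ In x s2.
Proof.
have -> : s1 ++ s2 = List.app s1 s2 by elim: s1 => //= a s ->.
exact: List.in_app_iff.
Qed.

Lemma In_seq_map (A B : Type) (f : A -> B) (y : B) (s : seq A) :
  In y (map f s) <-> exists x, f x = y /\ In x s.
Proof.
have -> : map f s = List.map f s by elim: s => //= a s ->.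
exact: List.in_map_iff.
Qed.

Lemma In_enum (T : finType) (A : {pred T}) (x : T) : In x (enum A) <-> x \in A.
Proof.
rewrite -mem_enum; elim: (enum A) => [|a s IH] //=; rewrite in_cons.
by split=> [[->|/IH ->]|/orP[/eqP ->|/IH]]; rewrite ?eqxx ?orbT; auto.
Qed.

Lemma In_filter_asbool (A : Type) (P : A -> Prop) (x : A) (s : seq A) :
  In x (List.filter (fun y => `[< P y >]) s) <-> In x s /\ P x.
Proof. by rewrite List.filter_In; split=> -[Hx HP]; split=> //; apply/asboolP. Qed.

Lemma In_if_asbool (A : Type) (P : Prop) (x y : A) :
  In y (if `[< P >] then [:: x] else [::]) <-> P /\ x = y.
Proof. by case: asboolP => HP /=; firstorder. Qed.

Lemma not_lit_iri_node (Iri Lit : Type) (v : value Iri Lit) :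
  ~ is_lit v -> is_iri_node v.
Proof. by case: v => //= *; exfalso; auto. Qed.

Section TypedGraphs.
Variables (Iri Lit : Type) (Pred : Iri -> Prop) (E : setting Iri Lit).
Local Notation value := (value Iri Lit).
Local Notation null_lit := (VNullLit Iri Lit 0).
Implicit Types (G : tgraph E) (X : {set Ty E}) (n m : value) (p : Iri).

Lemma in_underlying_nodes G n : In n (gnodes (underlying G)) <->
  [\/ exists p o, In (n, p, o) (gtriples G), exists s p, In (s, p, n) (gtriples G),
      exists T, In (n, T) (gtypes G) | In n (glits G)].
Proof.
rewrite /underlying /= !In_seq_cat !In_seq_map; split.
- case=> [[[[s p] o] [<- H]]|[[[[s p] o] [<- H]]|[[[m T] [<- H]]|H]]].
  + by apply: Or41; exists p, o.
  + by apply: Or42; exists s, p.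
  + by apply: Or43; exists T.
  + exact: Or44.
- case=> [[p [o H]]|[s [p H]]|[T H]|H].
  + by left; exists (n, p, o).
  + by right; left; exists (s, p, n).
  + by right; right; left; exists (n, T).
  + by right; right; right.
Qed.

Lemma subject_in_nodes G s p o :
  In (s, p, o) (gtriples G) -> In s (gnodes (underlying G)).
Proof. by move=> H; apply/in_underlying_nodes/Or41; exists p, o. Qed.

Lemma object_in_nodes G s p o :
  In (s, p, o) (gtriples G) -> In o (gnodes (underlying G)).
Proof. by move=> H; apply/in_underlying_nodes/Or42; exists s, p. Qed.

Lemma typed_in_nodes G n T : In (n, T) (gtypes G) -> In n (gnodes (underlying G)).
Proof. by move=> H; apply/in_underlying_nodes/Or43; exists T. Qed.

Lemma lit_in_nodes G n : In n (glits G) -> In n (gnodes (underlying G)).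
Proof. by move=> H; apply/in_underlying_nodes/Or44. Qed.

Lemma typed_not_lit G n T :
  is_typed_graph Pred G -> In (n, T) (gtypes G) -> ~ is_lit n.
Proof. by case=> _ [+ _]; apply. Qed.

Lemma lit_is_lit G n : is_typed_graph Pred G -> In n (glits G) -> is_lit n.
Proof. by case=> _ [_]; apply. Qed.

Lemma eval_term_not_null (v : nat -> Lit) (t : term (Fn E)) :
  ~ is_null (eval_term v t).
Proof. by case: t => [x|f xs] []. Qed.

Definition has_types G m X := forall T, T \in X -> In (m, T) (gtypes G).

Definition requires X p := exists2 T, T \in X &
  exists S mu, delta T p = Some (S, mu) /\ (mu = MOne \/ mu = MPlus).

Definition lit_successor X p := exists2 T, T \in X &
  exists mu, delta T p = Some (SLiteral (Ty E), mu).

Definition succ_types X p : {set Ty E} :=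
  [set S | `[< exists2 T, T \in X & exists mu, delta T p = Some (SType S, mu) >]].

Definition null_of X : value := VNullIri Iri Lit (enum_rank X).

Definition succ_node X p : value :=
  if `[< lit_successor X p >] then null_lit else null_of (succ_types X p).

Lemma succ_node_lit X p T mu : T \in X ->
  delta T p = Some (SLiteral (Ty E), mu) -> succ_node X p = null_lit.
Proof.
move=> HT Hd; rewrite /succ_node; case: asboolP => // Hno.
by case: Hno; exists T => //; exists mu.
Qed.

Section ShapeSuccessors.
Variable G : tgraph E.
Hypotheses (G_typed : is_typed_graph Pred G) (G_shape : satisfies_shape G).

Lemma successor_has_stype T p S mu n o : delta T p = Some (S, mu) ->
  In (n, T) (gtypes G) -> In (n, p, o) (gtriples G) -> has_stype G S o.
Proof. by move=> Hd Hn; have [Hst _] := G_shape Hd Hn; apply: Hst. Qed.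

Lemma required_successor m X p : has_types G m X -> requires X p ->
  exists m', In (m, p, m') (gtriples G) /\
    (succ_node X p = null_lit /\ is_lit m' \/
     [/\ succ_node X p = null_of (succ_types X p), ~ is_lit m'
       & has_types G m' (succ_types X p)]).
Proof.
move=> HX [T HT [S [mu [Hd Hmu]]]].
have [m' Hm'] := (G_shape Hd (HX T HT)).2.2 Hmu.
exists m'; split=> //; rewrite /succ_node.
case: asboolP => [[T' HT' [mu' Hd']]|Hnolit]; [left|right].
  split=> //.
  exact: lit_is_lit G_typed (successor_has_stype Hd' (HX T' HT') Hm').
split=> //.
- case: S Hd => [S0|] Hd.
    exact: typed_not_lit G_typed (successor_has_stype Hd (HX T HT) Hm').
  by case: Hnolit; exists T => //; exists mu.
- move=> S0; rewrite inE => /asboolP [T' HT' [mu' Hd']].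
  exact: successor_has_stype Hd' (HX T' HT') Hm'.
Qed.

Lemma succ_node_type m X p T S0 mu : has_types G m X -> requires X p ->
  T \in X -> delta T p = Some (SType S0, mu) ->
  succ_node X p = null_of (succ_types X p) /\ S0 \in succ_types X p.
Proof.
move=> HX Hr HT Hd.
have [m' [Hm' [[_ Hlit]|[-> _ _]]]] := required_successor HX Hr.
  by case: (typed_not_lit G_typed (successor_has_stype Hd (HX T HT) Hm')).
by split=> //; rewrite inE; apply/asboolP; exists T => //; exists mu.
Qed.

End ShapeSuccessors.
End TypedGraphs.

Section UniversalSolution.
Variables (Iri Lit : Type) (Pred : Iri -> Prop) (E : setting Iri Lit).
Variables (I : instance E) (G0 : tgraph E).
Hypothesis delta_pred : forall (T : Ty E) p, delta T p <> None -> Pred p.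
Hypothesis G0_sol : solution Pred I G0.
Local Notation value := (value Iri Lit).
Local Notation null_lit := (VNullLit Iri Lit 0).
Local Notation sol := (solution Pred I).
Implicit Types (G : tgraph E) (X : {set Ty E}) (n m c : value) (p : Iri).

Definition certainly (P : tgraph E -> Prop) := forall G, sol G -> P G.

Definition certain_types c : {set Ty E} :=
  [set T | `[< certainly (fun G => In (c, T) (gtypes G)) >]].

Definition realized X := certainly (fun G => exists m,
  [/\ In m (gnodes (underlying G)), ~ is_lit m & has_types G m X]).

(* Any fact holding in every solution holds in [G0], so filtering the facts
   of [G0] loses nothing. *)
Definition core (A : Type) (facts : tgraph E -> seq A) (const : A -> Prop) :=
  List.filter (fun x => `[< const x /\ certainly (fun G => In x (facts G)) >])
    (facts G0).

Definition core_triples :=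
  core (@gtriples _ _ E) (fun t => ~ is_null t.1.1 /\ ~ is_null t.2).
Definition core_types := core (@gtypes _ _ E) (fun x => ~ is_null x.1).
Definition core_lits := core (@glits _ _ E) (fun v => ~ is_null v).
Definition core_nodes := List.map fst core_types.

(* Every predicate that a solution is forced to use occurs in [G0]. *)
Definition preds0 := List.map (fun t : triple Iri Lit => t.1.2) (gtriples G0).

(* A required successor of a constant that is not the same in all solutions
   is replaced by the canonical one; none is added next to a certain
   successor, which keeps the multiplicities [1] and [?] intact. *)
Definition const_edges := List.flat_map (fun c => List.flat_map (fun p =>
  if `[< requires (certain_types c) p /\ ~ exists o, In (c, p, o) core_triples >]
  then [:: (c, p, succ_node (certain_types c) p)] else [::]) preds0) core_nodes.

Definition realized_sets :=
  List.filter (fun X => `[< realized X >]) (enum {set Ty E}).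

Definition null_edges := List.flat_map (fun X => List.flat_map (fun p =>
  if `[< requires X p >] then [:: (null_of X, p, succ_node X p)] else [::])
  preds0) realized_sets.

Definition null_types := List.flat_map (fun X =>
  List.map (fun T => (null_of X, T)) (enum X)) realized_sets.

Definition new_edges := List.app const_edges null_edges.

(* The null literal is a node only if some edge points to it: otherwise it
   would have no partner in a solution without literals. *)
Definition univ : tgraph E :=
  TGraph (List.app core_triples new_edges) (List.app core_types null_types)
    (List.app core_lits
       (List.filter (fun v => `[< v = null_lit >]) (List.map snd new_edges))).

Lemma in_core A (facts : tgraph E -> seq A) const x :
  In x (core facts const) <-> const x /\ certainly (fun G => In x (facts G)).
Proof.
rewrite In_filter_asbool; split=> [[] //|[Hc Hall]].
by split=> //; apply: Hall.
Qed.

Lemma core_in_solution A (facts : tgraph E -> seq A) const x G :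
  In x (core facts const) -> sol G -> In x (facts G).
Proof. by case/in_core=> _; apply. Qed.

Lemma in_certain_types c T :
  T \in certain_types c <-> certainly (fun G => In (c, T) (gtypes G)).
Proof. by rewrite inE; split=> /asboolP. Qed.

Lemma in_core_nodes c : In c core_nodes <-> exists T, In (c, T) core_types.
Proof.
rewrite List.in_map_iff; split=> [[[c' T] [/= -> H]]|[T H]]; first by exists T.
by exists (c, T).
Qed.

Lemma in_realized_sets X : In X realized_sets <-> realized X.
Proof.
rewrite In_filter_asbool; split=> [[] //|HX]; split=> //.
exact/In_enum.
Qed.

Lemma in_const_edges t : In t const_edges <-> exists c p,
  [/\ t = (c, p, succ_node (certain_types c) p), In c core_nodes, In p preds0,
      requires (certain_types c) p & ~ exists o, In (c, p, o) core_triples].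
Proof.
rewrite /const_edges List.in_flat_map; setoid_rewrite List.in_flat_map.
setoid_rewrite In_if_asbool; split.
  by case=> c [Hc [p [Hp [[Hr Hno] <-]]]]; exists c, p.
by case=> c [p [-> Hc Hp Hr Hno]]; exists c; split=> //; exists p.
Qed.

Lemma in_null_edges t : In t null_edges <-> exists X p,
  [/\ t = (null_of X, p, succ_node X p), realized X, In p preds0 & requires X p].
Proof.
rewrite /null_edges List.in_flat_map; setoid_rewrite List.in_flat_map.
setoid_rewrite In_if_asbool; setoid_rewrite in_realized_sets; split.
  by case=> X [HX [p [Hp [Hr <-]]]]; exists X, p.
by case=> X [p [-> HX Hp Hr]]; exists X; split=> //; exists p.
Qed.

Lemma in_null_types n T : In (n, T) null_types <->
  exists2 X, n = null_of X & realized X /\ T \in X.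
Proof.
rewrite /null_types List.in_flat_map; setoid_rewrite List.in_map_iff.
setoid_rewrite in_realized_sets; setoid_rewrite In_enum.
split; first by case=> X [HX [T' [[<- <-] HT]]]; exists X.
by case=> X -> [HX HT]; exists X; split=> //; exists T.
Qed.

Lemma in_univ_triples t : In t (gtriples univ) <->
  [\/ In t core_triples, In t const_edges | In t null_edges].
Proof.
rewrite /= !List.in_app_iff; split=> [[|[|]]|[||]].
- exact: Or31.
- exact: Or32.
- exact: Or33.
- by left.
- by right; left.
- by right; right.
Qed.

Lemma in_univ_types x : In x (gtypes univ) <-> In x core_types \/ In x null_types.
Proof. exact: List.in_app_iff. Qed.

Lemma in_univ_lits v : In v (glits univ) <->
  In v core_lits \/ v = null_lit /\ exists s p, In (s, p, v) new_edges.
Proof.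
rewrite /= List.in_app_iff In_filter_asbool List.in_map_iff; split.
  case=> [|[[[[s p] o] [/= <- Ht]] Ho]]; [by left|right].
  by split=> //; exists s, p.
case=> [|[-> [s [p Ht]]]]; [by left|right].
by split=> //; exists (s, p, null_lit).
Qed.

Lemma requires_pred X p : requires X p -> Pred p.
Proof. by case=> T _ [S [mu [Hd _]]]; apply: (@delta_pred T); rewrite Hd. Qed.

Lemma in_preds0 s p o : In (s, p, o) (gtriples G0) -> In p preds0.
Proof. by move=> H; apply/List.in_map_iff; exists (s, p, o). Qed.

Lemma core_node_not_null c : In c core_nodes -> ~ is_null c.
Proof. by case/in_core_nodes=> T /in_core []. Qed.

Lemma core_type_certain n T : In (n, T) core_types -> T \in certain_types n.
Proof. by move=> HnT; apply/in_certain_types => G; apply: core_in_solution HnT.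
Qed.

Lemma has_certain_types c G : sol G -> has_types G c (certain_types c).
Proof. by move=> HG T /in_certain_types; apply. Qed.

Lemma certain_types_realized c : In c core_nodes -> realized (certain_types c).
Proof.
case/in_core_nodes=> T HcT G HG; have HcG := core_in_solution HcT HG.
exists c; split; [exact: typed_in_nodes HcG|exact: typed_not_lit HG.1 HcG|].
exact: has_certain_types.
Qed.

Lemma realized_succ_types X p : realized X -> requires X p ->
  succ_node X p = null_of (succ_types X p) -> realized (succ_types X p).
Proof.
move=> HX Hr Hnull G HG; have [m [_ _ HmX]] := HX G HG.
have [m' [Hm' [[Hlit _]|[_ Hm'lit Hm'X]]]] :=
  required_successor HG.1 HG.2.1 HmX Hr.
  by rewrite Hnull in Hlit.
by exists m'; split=> //; apply: object_in_nodes Hm'.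
Qed.

Lemma univ_succ_const n p o : ~ is_null n -> In (n, p, o) (gtriples univ) ->
  In (n, p, o) core_triples \/
  [/\ o = succ_node (certain_types n) p, In n core_nodes, In p preds0,
      requires (certain_types n) p & ~ exists o', In (n, p, o') core_triples].
Proof.
move=> Hn /in_univ_triples [|/in_const_edges [c [p' [[<- <- ->] ? ? ? ?]]]|].
- by left.
- by right.
- by case/in_null_edges=> X [p' [[En _ _] _ _ _]]; case: Hn; rewrite En.
Qed.

Lemma univ_succ_null X p o : In (null_of X, p, o) (gtriples univ) ->
  [/\ o = succ_node X p, realized X, In p preds0 & requires X p].
Proof.
case/in_univ_triples=> [/in_core [[Hn _] _]|/in_const_edges|/in_null_edges].
- by case: Hn.
- by case=> c [p' [[Ec _ _] Hc _ _ _]]; case: (core_node_not_null Hc); rewrite -Ec.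
- by case=> Y [p' [[/ord_inj/enum_rank_inj -> <- ->] ? ? ?]].
Qed.

Lemma univ_null_lit_no_succ p o : ~ In (null_lit, p, o) (gtriples univ).
Proof.
case/in_univ_triples=> [/in_core [[Hn _] _]|/in_const_edges|/in_null_edges].
- by case: Hn.
- by case=> c [p' [[Ec _ _] Hc _ _ _]]; case: (core_node_not_null Hc); rewrite -Ec.
- by case=> X [p' [[] //]].
Qed.

Lemma univ_typed : is_typed_graph Pred univ.
Proof.
split; [|split].
- move=> s p o /in_univ_triples [Ht|/in_const_edges|/in_null_edges].
  + exact: G0_sol.1.1 _ _ _ (core_in_solution Ht G0_sol).
  + case=> c [p' [[-> -> _] /in_core_nodes [T HcT] _ Hr _]].
    split; last exact: requires_pred Hr.
    exact/not_lit_iri_node/(typed_not_lit G0_sol.1)/(core_in_solution HcT G0_sol).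
  + by case=> X [p' [[-> -> _] _ _ Hr]]; split; last exact: requires_pred Hr.
- move=> n T /in_univ_types [HnT|/in_null_types [X -> _]] //.
  exact: typed_not_lit G0_sol.1 (core_in_solution HnT G0_sol).
- move=> n /in_univ_lits [Hn|[-> _]] //.
  exact: lit_is_lit G0_sol.1 (core_in_solution Hn G0_sol).
Qed.

Lemma succ_node_has_stype X p T S mu s : realized X -> requires X p ->
  T \in X -> delta T p = Some (S, mu) -> In (s, p, succ_node X p) new_edges ->
  has_stype univ S (succ_node X p).
Proof.
move=> HX Hr HT Hd Hs; case: S Hd => [S0|] Hd /=.
- have [m [_ _ HmX]] := HX G0 G0_sol.
  have [Hnull HS0] := succ_node_type G0_sol.1 G0_sol.2.1 HmX Hr HT Hd.
  apply/in_univ_types; right; apply/in_null_types; rewrite Hnull.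
  by exists (succ_types X p); split=> //; apply: realized_succ_types.
- have Hlit := succ_node_lit HT Hd.
  by apply/in_univ_lits; right; split=> //; exists s, p.
Qed.

Lemma univ_succ_stype T p S mu n o : delta T p = Some (S, mu) ->
  In (n, T) (gtypes univ) -> In (n, p, o) (gtriples univ) -> has_stype univ S o.
Proof.
move=> Hd /in_univ_types [HnT|/in_null_types [X -> [HX HT]]] Ho.
- move: (HnT) => /in_core [/= Hn _].
  have HT := core_type_certain HnT.
  case/(univ_succ_const Hn): Ho => [Ho|[-> Hc Hp Hr Hno]].
  + move: (Ho) => /in_core [[_ Ho_const] _].
    have Hst G (HG : sol G) : has_stype G S o := successor_has_stype HG.2.1 Hd
      (core_in_solution HnT HG) (core_in_solution Ho HG).
    case: S Hd Hst => [S0|] Hd Hst /=; [apply/in_univ_types|apply/in_univ_lits];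
      by left; apply/in_core; split; [|exact: Hst].
  + have Hs : In (n, p, succ_node (certain_types n) p) new_edges.
      by apply/List.in_app_iff; left; apply/in_const_edges; exists n, p; split.
    exact: succ_node_has_stype (certain_types_realized Hc) Hr HT Hd Hs.
- case/univ_succ_null: Ho => -> _ Hp Hr.
  have Hs : In (null_of X, p, succ_node X p) new_edges.
    by apply/List.in_app_iff; right; apply/in_null_edges; exists X, p; split.
  exact: succ_node_has_stype HX Hr HT Hd Hs.
Qed.

Lemma univ_succ_unique T p S mu n o1 o2 : delta T p = Some (S, mu) ->
  (mu = MOne \/ mu = MOpt) -> In (n, T) (gtypes univ) ->
  In (n, p, o1) (gtriples univ) -> In (n, p, o2) (gtriples univ) -> o1 = o2.
Proof.
move=> Hd Hmu /in_univ_types [HnT|/in_null_types [X -> _]]; last first.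
  by move=> /univ_succ_null [-> _ _ _] /univ_succ_null [-> _ _ _].
move: (HnT) => /in_core [/= Hn _].
case/(univ_succ_const Hn)=> [H1|[-> _ _ _ Hno1]];
  case/(univ_succ_const Hn)=> [H2|[-> _ _ _ Hno2]] //.
- have [_ [Huniq _]] := G0_sol.2.1 _ _ _ _ Hd _ (core_in_solution HnT G0_sol).
  exact: Huniq Hmu _ _ (core_in_solution H1 G0_sol) (core_in_solution H2 G0_sol).
- by case: Hno2; exists o1.
- by case: Hno1; exists o2.
Qed.

Lemma univ_succ_exists T p S mu n : delta T p = Some (S, mu) ->
  (mu = MOne \/ mu = MPlus) -> In (n, T) (gtypes univ) ->
  exists o, In (n, p, o) (gtriples univ).
Proof.
move=> Hd Hmu /in_univ_types [HnT|/in_null_types [X -> [HX HT]]].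
- have HT := core_type_certain HnT.
  have Hr : requires (certain_types n) p by exists T => //; exists S, mu.
  have [_ [_ Hex]] := G0_sol.2.1 _ _ _ _ Hd _ (core_in_solution HnT G0_sol).
  have [o0 /in_preds0 Hp] := Hex Hmu.
  have Hc : In n core_nodes by apply/in_core_nodes; exists T.
  have [[o Ho]|Hno] := EM (exists o, In (n, p, o) core_triples).
    by exists o; apply/in_univ_triples/Or31.
  exists (succ_node (certain_types n) p); apply/in_univ_triples/Or32.
  by apply/in_const_edges; exists n, p; split.
- have Hr : requires X p by exists T => //; exists S, mu.
  have [m [_ _ HmX]] := HX G0 G0_sol.
  have [m' [/in_preds0 Hp _]] := required_successor G0_sol.1 G0_sol.2.1 HmX Hr.
  exists (succ_node X p); apply/in_univ_triples/Or33.
  by apply/in_null_edges; exists X, p; split.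
Qed.

Lemma univ_shape : satisfies_shape univ.
Proof.
move=> T p S mu Hd n Hn; split; [|split].
- by move=> o; apply: univ_succ_stype Hd Hn.
- by move=> Hmu o1 o2; apply: univ_succ_unique Hd Hmu Hn.
- by move=> Hmu; apply: univ_succ_exists Hd Hmu Hn.
Qed.

Lemma univ_tgds : satisfies_tgds I univ.
Proof.
move=> d Hd v Hbody a Ha.
have Hall G : sol G -> hatom_holds G v a.
  by move=> HG; apply: HG.2.2 d Hd v Hbody a Ha.
case: a Ha Hall => [t1 p t2|T t|t] _ Hall /=.
- apply/in_univ_triples/Or31/in_core.
  by split; [split; apply: eval_term_not_null|].
- by apply/in_univ_types; left; apply/in_core; split; [apply: eval_term_not_null|].
- by apply/in_univ_lits; left; apply/in_core; split; [apply: eval_term_not_null|].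
Qed.

Lemma univ_solution : sol univ.
Proof.
by split; [exact: univ_typed|split; [exact: univ_shape|exact: univ_tgds]].
Qed.

Definition sim_rel G n m : Prop :=
  [/\ In n (gnodes (underlying univ)), In m (gnodes (underlying G)) &
    [\/ ~ is_null n /\ n = m,
        exists2 X, n = null_of X & ~ is_lit m /\ has_types G m X
      | n = null_lit /\ is_lit m]].

Lemma sim_rel_succ G m X p : sol G -> has_types G m X -> requires X p ->
  In (succ_node X p) (gnodes (underlying univ)) ->
  exists m', In (m, p, m') (gtriples G) /\ sim_rel G (succ_node X p) m'.
Proof.
move=> HG HmX Hr Hn.
have [m' [Hm' Hcase]] := required_successor HG.1 HG.2.1 HmX Hr.
exists m'; split=> //; split=> //; first exact: object_in_nodes Hm'.
case: Hcase => [[-> Hlit]|[-> Hlit Hm'X]]; first exact: Or33.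
by apply: Or32; exists (succ_types X p).
Qed.

Lemma sim_rel_simulation G :
  sol G -> simulation (underlying univ) (underlying G) (sim_rel G).
Proof.
move=> HG n m [Hn Hm Hcase]; do 2!split=> //; split; [|split].
- by case: Hcase => [[_ <-]|[X -> [Hlit _]]|[-> Hlit]].
- by case: Hcase => [[_ ->]|[X -> _]|[-> _]] // Hnn; exfalso; apply: Hnn.
- move=> p n' He; have Hn' := object_in_nodes He.
  case: Hcase => [[Hnn <-]|[X En [_ HmX]]|[En _]]; last first.
  + by rewrite En in He; case: (univ_null_lit_no_succ He).
  + rewrite En in He Hn'; case/univ_succ_null: He => En' _ _ Hr.
    by rewrite En' in Hn' *; apply: sim_rel_succ HG HmX Hr Hn'.
  case/(univ_succ_const Hnn): He => [He|[En' _ _ Hr _]].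
  + exists n'; split; first exact: core_in_solution He HG.
    move: (He) => /in_core [[_ Hn'nn] _].
    by split=> //; [exact: object_in_nodes (core_in_solution He HG)|apply: Or31].
  + rewrite En' in Hn' *.
    exact: sim_rel_succ HG (has_certain_types HG) Hr Hn'.
Qed.

Lemma sim_rel_subject G s p o : sol G -> In (s, p, o) (gtriples univ) ->
  exists m, sim_rel G s m.
Proof.
move=> HG He; have Hs := subject_in_nodes He.
case/in_univ_triples: He => [He|/in_const_edges|/in_null_edges].
- move: (He) => /in_core [[Hsnn _] _]; exists s; split=> //; last exact: Or31.
  exact: subject_in_nodes (core_in_solution He HG).
- case=> c [p' [[Esc _ _] /in_core_nodes [T HcT] _ _ _]]; subst s.
  move: (HcT) => /in_core [/= Hcnn _]; exists c; split=> //; last exact: Or31.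
  exact: typed_in_nodes (core_in_solution HcT HG).
- case=> X [p' [[Esx _ _] HX _ _]]; subst s; have [m [Hm Hmlit HmX]] := HX G HG.
  by exists m; split=> //; apply: Or32; exists X.
Qed.

Lemma sim_rel_object G s p o : sol G -> In (s, p, o) (gtriples univ) ->
  exists m, sim_rel G o m.
Proof.
move=> HG He; have [m Hsm] := sim_rel_subject HG He.
have [_ [_ [_ [_ Hsucc]]]] := sim_rel_simulation HG Hsm.
by have [m' [_ Hom']] := Hsucc p o He; exists m'.
Qed.

Lemma sim_rel_total G n : sol G -> In n (gnodes (underlying univ)) ->
  exists m, sim_rel G n m.
Proof.
move=> HG Hn; case/in_underlying_nodes: (Hn) => [[p [o He]]|[s [p He]]|[T]|].
- exact: sim_rel_subject HG He.
- exact: sim_rel_object HG He.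
- case/in_univ_types=> [HnT|/in_null_types [X En [HX _]]].
    move: (HnT) => /in_core [/= Hnn _]; exists n; split=> //; last exact: Or31.
    exact: typed_in_nodes (core_in_solution HnT HG).
  have [m [Hm Hmlit HmX]] := HX G HG.
  by exists m; split=> //; apply: Or32; exists X.
- case/in_univ_lits=> [Hlit|[_ [s [p He]]]].
    move: (Hlit) => /in_core [Hnn _]; exists n; split=> //; last exact: Or31.
    exact: lit_in_nodes (core_in_solution Hlit HG).
  by apply: (sim_rel_object (s := s) (p := p) HG); apply/List.in_app_iff; right.
Qed.

Lemma univ_simulated G : sol G -> simulated (underlying univ) (underlying G).
Proof.
move=> HG n Hn; exists (sim_rel G); split; first exact: sim_rel_simulation.
by have [m Hnm] := sim_rel_total HG Hn; exists m; case: Hnm.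
Qed.

Lemma universal_sim_solution_exists : exists U, universal_sim_solution Pred I U.
Proof. by exists univ; split; [exact: univ_solution|exact: univ_simulated]. Qed.

End UniversalSolution.

Lemma certain_true_iff_universal (Iri Lit : Type) (Pred : Iri -> Prop)
    (E : setting Iri Lit) (QC : query Iri Lit -> Prop) (Q : query Iri Lit)
    (I : instance E) :
  robust_under_simulation QC -> QC Q ->
  (exists U, universal_sim_solution Pred I U) ->
  (certain_true Pred I Q <->
   forall U, universal_sim_solution Pred I U -> Q (underlying U)).
Proof.
move=> Hrob HQ [U [HU Hsim]]; split=> [Hcert U' [HU' _]|Huniv G HG].
  exact: Hcert.
exact: Hrob Q HQ _ _ (Hsim G HG) (Huniv U (conj HU Hsim)).
Qed.

Theorem theorem6 (Iri Lit : Type) (Pred : Iri -> Prop)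
  (E : setting Iri Lit) (QC : query Iri Lit -> Prop) (Q : query Iri Lit)
  (I : instance E) :
  wf_setting Pred E ->
  consistent_setting Pred E ->
  robust_under_simulation QC ->
  QC Q ->
  consistent_instance I ->
  (certain_true Pred I Q <->
   forall U, universal_sim_solution Pred I U -> Q (underlying U)).
Proof.
move=> [delta_pred _] Hcons Hrob HQ HI.
have [G0 HG0] := Hcons I HI.
apply: certain_true_iff_universal Hrob HQ _.
exact: universal_sim_solution_exists delta_pred HG0.
Qed.
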